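(* Let $a\ge 2$ and $n_1,n_2\ge1$. Let $M_{n_1}\in\mathrm{Sym}_{n_1}(\mathbb{Z})$ and $M'_{n_2}\in\mathrm{Sym}_{n_2}(\mathbb{Z})$ be fixed with $\mathrm{Cok}_*^{(a)}(M_{n_1}\bmod a)\simeq\mathrm{Cok}_*^{(a)}(M'_{n_2}\bmod a)$. Let $z,\xi_1,\xi_2,\ldots$ be independent and uniformly distributed in $\{0,1,\ldots,a-1\}$. Then the equivalence classes $$\mathrm{Cok}_*^{(a)}\left(\begin{pmatrix}M_{n_1}&\boldsymbol{\xi}_1\\\boldsymbol{\xi}_1^T&z\end{pmatrix}\bmod a\right)\quad\text{and}\quad\mathrm{Cok}_*^{(a)}\left(\begin{pmatrix}M'_{n_2}&\boldsymbol{\xi}_2\\\boldsymbol{\xi}_2^T&z\end{pmatrix}\bmod a\right)$$ have the same distribution, where $\boldsymbol{\xi}_1=(\xi_1,\ldots,\xi_{n_1})^T$ and $\boldsymbol{\xi}_2=(\xi_1,\ldots,\xi_{n_2})^T$.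
   Context: Cokernel with quasi-pairing: for a prime power $p^e$ and $H_{n_1}\in\mathrm{Sym}_{n_1}(\mathbb{Z}/p^e\mathbb{Z})$, $H'_{n_2}\in\mathrm{Sym}_{n_2}(\mathbb{Z}/p^e\mathbb{Z})$, write $\mathrm{Cok}_*^{(p^e)}(H_{n_1})\simeq\mathrm{Cok}_*^{(p^e)}(H'_{n_2})$ if there exist $n\ge\max\{n_1,n_2\}$ and invertible symmetric $H^c\in\mathrm{Sym}_{n-n_1}(\mathbb{Z}/p^e\mathbb{Z})\cap\mathrm{GL}_{n-n_1}(\mathbb{Z}/p^e\mathbb{Z})$, $H'^c\in\mathrm{Sym}_{n-n_2}(\mathbb{Z}/p^e\mathbb{Z})\cap\mathrm{GL}_{n-n_2}(\mathbb{Z}/p^e\mathbb{Z})$ such that $\mathrm{diag}(H^c,H_{n_1})=U\,\mathrm{diag}(H'^c,H'_{n_2})\,U^T$ for some $U\in\mathrm{GL}_n(\mathbb{Z}/p^e\mathbb{Z})$. This is an equivalence relation; $\mathrm{Cok}_*^{(p^e)}(H)$ denotes the class of $H$. For $a=p_1^{e_1}\cdots p_l^{e_l}$ and symmetric matrices $H,H'$ over $\mathbb{Z}/a\mathbb{Z}$, $\mathrm{Cok}_*^{(a)}(H)\simeq\mathrm{Cok}_*^{(a)}(H')$ means $\mathrm{Cok}_*^{(p_i^{e_i})}(H\bmod p_i^{e_i})\simeq\mathrm{Cok}_*^{(p_i^{e_i})}(H'\bmod p_i^{e_i})$ for all $i$. $\bmod a$ denotes entrywise reduction. *)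

From Stdlib Require Import ClassicalDescription.
From HB Require Import structures.
From mathcomp Require Import all_boot all_order all_algebra.
Set Implicit Arguments. Unset Strict Implicit. Unset Printing Implicit Defensive.
Import Order.TTheory GRing.Theory Num.Theory.
Local Open Scope ring_scope.

Definition pb (P : Prop) : bool :=
  if excluded_middle_informative P then true else false.

Definition symmx {R : Type} {n : nat} (A : 'M[R]_n) : Prop := A^T = A.

(* Cok_*^{(q)}(H) ~ Cok_*^{(q)}(H') for matrices over Z/qZ (q a prime power):
   there exist invertible symmetric Hc (size k1), Hc' (size k2) with
   k1 + n1 = k2 + n2 =: n and U in GL_n with
   diag(Hc, H) = U diag(Hc', H') U^T. *)
Definition cokEquivPP (q : nat) (n1 n2 : nat)
    (H : 'M['Z_q]_n1) (H' : 'M['Z_q]_n2) : Prop :=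
  exists (k1 k2 : nat) (e : (k2 + n2 = k1 + n1)%N)
         (Hc : 'M['Z_q]_k1) (Hc' : 'M['Z_q]_k2) (U : 'M['Z_q]_(k1 + n1)),
    [/\ symmx Hc /\ Hc \in unitmx, symmx Hc' /\ Hc' \in unitmx,
        U \in unitmx &
        block_mx Hc 0 0 H =
          U *m castmx (e, e) (block_mx Hc' 0 0 H') *m U^T].

Definition redZ (a q : nat) (m n : nat) (A : 'M['Z_a]_(m, n)) : 'M['Z_q]_(m, n) :=
  map_mx (fun x : 'Z_a => ((val x)%:R : 'Z_q)) A.

Definition redI (a : nat) (m n : nat) (A : 'M[int]_(m, n)) : 'M['Z_a]_(m, n) :=
  map_mx (fun x : int => (x%:~R : 'Z_a)) A.

(* Cok_*^{(a)}(H) ~ Cok_*^{(a)}(H'): equivalence modulo every prime power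
   p^e exactly dividing a. *)
Definition cokEquiv (a : nat) (n1 n2 : nat)
    (H : 'M['Z_a]_n1) (H' : 'M['Z_a]_n2) : Prop :=
  forall p : nat, p \in primes a ->
    cokEquivPP (redZ (p ^ logn p a) H) (redZ (p ^ logn p a) H').

(* The bordered matrix [[M, xi],[xi^T, z]] mod a, with xi = (xi_1..xi_n)
   taken as the first n coordinates of the sample vector. *)
Definition bordered (a n N : nat) (le_nN : (n <= N)%N) (M : 'M[int]_n)
    (z : 'I_a) (xi : {ffun 'I_N -> 'I_a}) : 'M['Z_a]_(n + 1) :=
  let v : 'cV['Z_a]_n := \col_i ((val (xi (widen_ord le_nN i)))%:R) in
  block_mx (redI a M) v v^T ((val z)%:R)%:M.

(* Call X and Y stably congruent when diag(C1, X) and diag(C2, Y) are congruent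
   for some invertible symmetric C1, C2; over Z/p^e this is the relation
   Cok_*^(p^e). Over a finite commutative ring R, count the pairs (z, v) for
   which the bordered matrix [[X, v], [v^T, z]] is stably congruent to a fixed
   T. A congruence X = U Y U^T transports v to U v, and an invertible block C
   of diag(C, X) splits off the bordered matrix after completing the square,
   z |-> z + u^T C^-1 u. Hence the count for X times |R|^(size Y) equals the
   count for Y times |R|^(size X), and modulo every prime power p^e || a the
   two events of the theorem have equally many outcomes. By the Chinese
   remainder theorem a sample mod a is the family of its reductions mod the
   p^e, and the event mod a is the conjunction of the events mod each p^e, so
   gluing bijections between the prime-power events yields a bijection of the
   whole sample space carrying one event onto the other. *)

From mathcomp Require Import all_boot all_order all_algebra.
From Stdlib Require Import ClassicalDescription.
From mathcomp Require Import zify ring.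
Set Implicit Arguments. Unset Strict Implicit. Unset Printing Implicit Defensive.
Import Order.TTheory GRing.Theory Num.Theory.
Local Open Scope ring_scope.

Section Congruence.
Variable R : comUnitRingType.

Lemma mulmx_block_diag m1 m2 n1 n2 p1 p2
    (A : 'M[R]_(m1, n1)) (B : 'M[R]_(m2, n2))
    (C : 'M[R]_(n1, p1)) (D : 'M[R]_(n2, p2)) :
  block_mx A 0 0 B *m block_mx C 0 0 D = block_mx (A *m C) 0 0 (B *m D).
Proof. by rewrite mulmx_block !mulmx0 !mul0mx !addr0 !add0r. Qed.

Lemma tr_block_diag m1 m2 n1 n2 (A : 'M[R]_(m1, n1)) (B : 'M[R]_(m2, n2)) :
  (block_mx A 0 0 B)^T = block_mx A^T 0 0 B^T.
Proof. by rewrite tr_block_mx !trmx0. Qed.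

Definition blockdiag m n (A : 'M[R]_m) (B : 'M[R]_n) : 'M[R]_(m + n) :=
  block_mx A 0 0 B.

(* [U] and [V] are rectangular so that [m] and [n] need only be equal
   propositionally. *)
Definition congruent m n (X : 'M[R]_m) (Y : 'M[R]_n) :=
  exists (U : 'M[R]_(m, n)) (V : 'M[R]_(n, m)),
    [/\ U *m V = 1%:M, V *m U = 1%:M & X = U *m Y *m U^T].

Lemma congruent_refl n (X : 'M[R]_n) : congruent X X.
Proof. by exists 1%:M, 1%:M; rewrite mulmx1 mul1mx trmx1 mulmx1. Qed.

Lemma congruent_sym m n (X : 'M[R]_m) (Y : 'M[R]_n) :
  congruent X Y -> congruent Y X.
Proof.
move=> [U [V [UV VU ->]]]; exists V, U; split => //.
by rewrite !mulmxA VU mul1mx -mulmxA -trmx_mul VU trmx1 mulmx1.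
Qed.

Lemma congruent_trans m n p (X : 'M[R]_m) (Y : 'M[R]_n) (Z : 'M[R]_p) :
  congruent X Y -> congruent Y Z -> congruent X Z.
Proof.
move=> [U [V [UV VU ->]]] [U' [V' [UV' VU' ->]]].
exists (U *m U'), (V' *m V); split; last by rewrite trmx_mul !mulmxA.
- by rewrite mulmxA -(mulmxA U) UV' mulmx1 UV.
- by rewrite mulmxA -(mulmxA V') VU mulmx1 VU'.
Qed.

Lemma congruent_unitmx n (X Y : 'M[R]_n) :
  congruent X Y -> exists2 U, U \in unitmx & X = U *m Y *m U^T.
Proof. by move=> [U [V [UV _ ->]]]; exists U => //; case/mulmx1_unit: UV. Qed.

Lemma congruent_castmx m m' (e : m = m') (X : 'M[R]_m) :
  congruent (castmx (e, e) X) X.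
Proof. by case: m' / e; rewrite castmx_id; apply: congruent_refl. Qed.

Lemma congruent_blockdiag m1 m2 n1 n2 (A : 'M[R]_m1) (B : 'M[R]_m2)
    (A' : 'M[R]_n1) (B' : 'M[R]_n2) :
  congruent A A' -> congruent B B' -> congruent (blockdiag A B) (blockdiag A' B').
Proof.
move=> [U [V [UV VU ->]]] [U' [V' [UV' VU' ->]]].
exists (block_mx U 0 0 U'), (block_mx V 0 0 V'); split.
- by rewrite mulmx_block_diag UV UV' -scalar_mx_block.
- by rewrite mulmx_block_diag VU VU' -scalar_mx_block.
by rewrite /blockdiag tr_block_diag !mulmx_block_diag.
Qed.

Lemma congruent_blockdiagA k m n (A : 'M[R]_k) (B : 'M[R]_m) (C : 'M[R]_n) :
  congruent (blockdiag (blockdiag A B) C) (blockdiag A (blockdiag B C)).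
Proof.
have := block_mxA (A11 := A) (A12 := 0) (A13 := 0) (A21 := 0) (A22 := B)
  (A23 := 0) (A31 := 0) (A32 := 0) (A33 := C).
rewrite /= !row_mx0 !col_mx0 => eA.
by apply: congruent_sym; rewrite /blockdiag eA; apply: congruent_castmx.
Qed.

Lemma congruent_blockdiagC m n (A : 'M[R]_m) (B : 'M[R]_n) :
  congruent (blockdiag A B) (blockdiag B A).
Proof.
have swapK p q :
    block_mx 0 1%:M 1%:M 0 *m block_mx 0 1%:M 1%:M 0 = 1%:M :> 'M[R]_(p + q).
  by rewrite mulmx_block !mulmx0 !mul0mx !mulmx1 !addr0 !add0r -scalar_mx_block.
exists (block_mx 0 1%:M 1%:M 0), (block_mx 0 1%:M 1%:M 0); split => //.
rewrite /blockdiag tr_block_mx !trmx0 !trmx1 !mulmx_block.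
by rewrite !mulmx0 !mul0mx !mulmx1 !mul1mx !addr0 !add0r.
Qed.

Lemma blockdiag0X n (C : 'M[R]_0) (X : 'M[R]_n) : blockdiag C X = X.
Proof.
apply/matrixP => i j.
have -> : i = rshift 0 i by apply: val_inj.
have -> : j = rshift 0 j by apply: val_inj.
by rewrite /blockdiag block_mxEdr; congr (X _ _); apply: val_inj.
Qed.

Definition sym_unitmx k (C : 'M[R]_k) := symmx C /\ C \in unitmx.

Lemma sym_unitmx0 (C : 'M[R]_0) : sym_unitmx C.
Proof. by split; [apply/matrixP => -[] | rewrite unitmxE det_mx00 unitr1]. Qed.

Lemma sym_unitmx_blockdiag m n (A : 'M[R]_m) (B : 'M[R]_n) :
  sym_unitmx A -> sym_unitmx B -> sym_unitmx (blockdiag A B).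
Proof.
move=> [sA uA] [sB uB]; split.
  by rewrite /symmx /blockdiag tr_block_diag sA sB.
by rewrite unitmxE det_ublock unitrM -!unitmxE uA uB.
Qed.

Definition stably_congruent n1 n2 (X : 'M[R]_n1) (Y : 'M[R]_n2) :=
  exists k1 k2 (C1 : 'M[R]_k1) (C2 : 'M[R]_k2),
    [/\ (k2 + n2 = k1 + n1)%N, sym_unitmx C1, sym_unitmx C2
      & congruent (blockdiag C1 X) (blockdiag C2 Y)].

Lemma stably_congruent_sym n1 n2 (X : 'M[R]_n1) (Y : 'M[R]_n2) :
  stably_congruent X Y -> stably_congruent Y X.
Proof.
move=> [k1 [k2 [C1 [C2 [e sC1 sC2 cXY]]]]].
by exists k2, k1, C2, C1; split => //; apply: congruent_sym.
Qed.

Lemma stably_congruent_trans n1 n2 n3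
    (X : 'M[R]_n1) (Y : 'M[R]_n2) (Z : 'M[R]_n3) :
  stably_congruent X Y -> stably_congruent Y Z -> stably_congruent X Z.
Proof.
move=> [k1 [k2 [C1 [C2 [e sC1 sC2 cXY]]]]] [j1 [j2 [D1 [D2 [e' sD1 sD2 cYZ]]]]].
exists (j1 + k1)%N, (k2 + j2)%N, (blockdiag D1 C1), (blockdiag C2 D2).
split; [lia | exact: sym_unitmx_blockdiag | exact: sym_unitmx_blockdiag |].
apply: congruent_trans (congruent_blockdiagA _ _ _) _.
apply: congruent_trans (congruent_blockdiag (congruent_refl D1) cXY) _.
apply: congruent_trans (congruent_sym (congruent_blockdiagA _ _ _)) _.
apply: congruent_trans
  (congruent_blockdiag (congruent_blockdiagC D1 C2) (congruent_refl Y)) _.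
apply: congruent_trans (congruent_blockdiagA _ _ _) _.
apply: congruent_trans (congruent_blockdiag (congruent_refl C2) cYZ) _.
exact: congruent_sym (congruent_blockdiagA _ _ _).
Qed.

Lemma congruent_stably n1 n2 (X : 'M[R]_n1) (Y : 'M[R]_n2) :
  n2 = n1 -> congruent X Y -> stably_congruent X Y.
Proof.
move=> e cXY; exists 0%N, 0%N, 0, 0.
by split; [ | exact: sym_unitmx0 | exact: sym_unitmx0 | rewrite !blockdiag0X].
Qed.

Lemma stably_congruent_blockdiag k n (C : 'M[R]_k) (X : 'M[R]_n) :
  sym_unitmx C -> stably_congruent (blockdiag C X) X.
Proof.
move=> sC; exists 0%N, k, 0, C.
by split; [ | exact: sym_unitmx0 | | rewrite blockdiag0X; apply: congruent_refl].
Qed.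

Definition border n (X : 'M[R]_n) (v : 'cV[R]_n) (z : R) : 'M[R]_(n + 1) :=
  block_mx X v v^T z%:M.

Lemma congruent_border m n (X : 'M[R]_m) (Y : 'M[R]_n) U V (w : 'cV[R]_n) z :
  U *m V = 1%:M -> V *m U = 1%:M -> X = U *m Y *m U^T ->
  congruent (border X (U *m w) z) (border Y w z).
Proof.
move=> UV VU ->; exists (block_mx U 0 0 1%:M), (block_mx V 0 0 1%:M); split.
- by rewrite mulmx_block_diag UV mul1mx -scalar_mx_block.
- by rewrite mulmx_block_diag VU mul1mx -scalar_mx_block.
rewrite /border tr_block_diag trmx1 !mulmx_block.
by rewrite !mulmx0 !mul0mx !addr0 !add0r !mul1mx !mulmx1 trmx_mul.
Qed.

(* Completing the square: the column [u] is cleared against the invertible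
   block [C], which shifts the corner entry by [u^T C^-1 u]. *)
Lemma congruent_border_blockdiag k n (C : 'M[R]_k) (X : 'M[R]_n)
    (u : 'cV[R]_k) (v : 'cV[R]_n) z :
  sym_unitmx C ->
  congruent (border (blockdiag C X) (col_mx u v) (z + (u^T *m invmx C *m u) 0 0))
            (blockdiag C (border X v z)).
Proof.
move=> [sC uC]; set z' := z + _.
have eA := block_mxA (A11 := C) (A12 := 0) (A13 := u) (A21 := 0) (A22 := X)
  (A23 := v) (A31 := u^T) (A32 := v^T) (A33 := z'%:M).
rewrite /= in eA.
have -> : border (blockdiag C X) (col_mx u v) z' =
          block_mx (block_mx C 0 0 X) (col_mx u v) (row_mx u^T v^T) z'%:M.
  by rewrite /border /blockdiag tr_col_mx.
apply: congruent_trans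
  (congruent_sym (congruent_castmx (esym (addnA k n 1)) _)) _.
rewrite -eA.
pose G : 'M[R]_(n + 1, k) := col_mx 0 (u^T *m invmx C).
have GC : G *m C = col_mx 0 u^T.
  by rewrite mul_col_mx mul0mx -mulmxA mulVmx // mulmx1.
have CG : C *m G^T = row_mx 0 u.
  rewrite tr_col_mx trmx0 mul_mx_row mulmx0 trmx_mul trmxK trmx_inv sC.
  by rewrite mulmxA mulmxV // mul1mx.
exists (block_mx 1%:M 0 G 1%:M), (block_mx 1%:M 0 (- G) 1%:M); split.
- rewrite mulmx_block !mulmx0 !mul0mx !mulmx1 !mul1mx !addr0 !add0r addrN.
  by rewrite -scalar_mx_block.
- rewrite mulmx_block !mulmx0 !mul0mx !mulmx1 !mul1mx !addr0 !add0r addNr.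
  by rewrite -scalar_mx_block.
rewrite /blockdiag tr_block_mx trmx0 trmx1 !mulmx_block !mulmx0 !mul0mx !mulmx1.
rewrite !mul1mx !addr0 !add0r GC CG tr_col_mx trmx0 mul_col_row !mulmx0 !mul0mx.
rewrite addr0 trmx1 mulmx1 /border add_block_mx !add0r; congr block_mx.
rewrite trmx_mul trmxK trmx_inv sC mulmxA.
by rewrite /z' raddfD /= -mx11_scalar addrC.
Qed.

End Congruence.

Lemma pbP (P : Prop) : reflect P (pb P).
Proof. by rewrite /pb; case: excluded_middle_informative => p; constructor. Qed.

Lemma eq_pb (P Q : Prop) : (P <-> Q) -> pb P = pb Q.
Proof. by move=> PQ; apply/pbP/pbP => /PQ. Qed.

Lemma pb_stably_congruent_l (R : comUnitRingType) n1 n2 m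
    (X : 'M[R]_n1) (Y : 'M[R]_n2) (T : 'M[R]_m) :
  stably_congruent X Y -> pb (stably_congruent X T) = pb (stably_congruent Y T).
Proof.
move=> cXY; apply: eq_pb; split; last exact: stably_congruent_trans.
exact: stably_congruent_trans (stably_congruent_sym cXY).
Qed.

Lemma card_preim_bij (A B : finType) (f : A -> B) (P : pred B) :
  bijective f -> #|[pred x | P (f x)]| = #|P|.
Proof.
move=> bij_f; rewrite -(on_card_preimset (onW_bij P bij_f)).
by apply: eq_card => x; rewrite !inE.
Qed.

Lemma card_pred_snd (A B : finType) (Q : pred B) :
  #|[pred x : A * B | Q x.2]| = (#|A| * #|Q|)%N.
Proof. by rewrite -cardX; apply: eq_card => -[x y]. Qed.

Section BorderCount.
Variables (R : finComUnitRingType) (m : nat) (T : 'M[R]_m).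

Definition border_equiv n (X : 'M[R]_n) : pred (R * 'cV[R]_n) :=
  [pred s | pb (stably_congruent (border X s.2 s.1) T)].

Lemma card_border_equiv_blockdiag k n (C : 'M[R]_k) (X : 'M[R]_n) :
  sym_unitmx C ->
  #|border_equiv (blockdiag C X)| = (#|R| ^ k * #|border_equiv X|)%N.
Proof.
move=> sC; pose q (u : 'cV[R]_k) := (u^T *m invmx C *m u) 0 0.
pose f (t : 'cV[R]_k * (R * 'cV[R]_n)) : R * 'cV[R]_(k + n) :=
  (t.2.1 + q t.1, col_mx t.1 t.2.2).
have bij_f : bijective f.
  exists (fun s => (usubmx s.2, (s.1 - q (usubmx s.2), dsubmx s.2))).
    by move=> [u [z v]]; rewrite /f /= col_mxKu col_mxKd addrK.
  by move=> [z w]; rewrite /f /= subrK vsubmxK.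
rewrite -(card_preim_bij _ bij_f) -[k in (_ ^ k)%N]muln1 -card_mx -card_pred_snd.
apply: eq_card => -[u [z v]]; rewrite !inE /f /=.
apply: pb_stably_congruent_l.
apply: stably_congruent_trans (stably_congruent_blockdiag _ sC).
apply: congruent_stably; first by rewrite addnA.
exact: congruent_border_blockdiag.
Qed.

Lemma card_border_equiv_congruent n1 n2 (X : 'M[R]_n1) (Y : 'M[R]_n2) :
  n2 = n1 -> congruent X Y -> #|border_equiv X| = #|border_equiv Y|.
Proof.
move=> e [U [V [UV VU eX]]].
pose f (s : R * 'cV[R]_n2) : R * 'cV[R]_n1 := (s.1, U *m s.2).
have bij_f : bijective f.
  exists (fun s => (s.1, V *m s.2)) => -[z w];
  by rewrite /f /= mulmxA ?UV ?VU mul1mx.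
rewrite -(card_preim_bij _ bij_f); apply: eq_card => -[z w]; rewrite !inE /f /=.
apply: pb_stably_congruent_l; apply: congruent_stably; first by rewrite e.
exact: congruent_border UV VU eX.
Qed.

Lemma card_border_equiv_stable n1 n2 (X : 'M[R]_n1) (Y : 'M[R]_n2) :
  stably_congruent X Y ->
  (#|R| ^ n2 * #|border_equiv X| = #|R| ^ n1 * #|border_equiv Y|)%N.
Proof.
move=> [k1 [k2 [C1 [C2 [e sC1 sC2 cXY]]]]].
have := card_border_equiv_congruent e cXY.
rewrite !card_border_equiv_blockdiag // => eXY.
have R_gt0 : (0 < #|R|)%N by apply/card_gt0P; exists 0.
apply/eqP; rewrite -(@eqn_pmul2l (#|R| ^ (k1 + k2))) ?expn_gt0 ?R_gt0 //.
apply/eqP.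
transitivity (#|R| ^ (k2 + n2) * (#|R| ^ k1 * #|border_equiv X|))%N.
  by rewrite !expnD; ring.
by rewrite e eXY !expnD; ring.
Qed.

Lemma card_widen_col n (P : pred (R * 'cV[R]_n)) N (le_nN : (n <= N)%N) :
  #|[pred s : R * 'cV[R]_N | P (s.1, rowsub (widen_ord le_nN) s.2)]|
  = (#|R| ^ (N - n) * #|P|)%N.
Proof.
have [r eN] : exists r, N = (n + r)%N by exists (N - n)%N; rewrite subnKC.
subst N; rewrite addKn.
pose f (t : 'cV[R]_r * (R * 'cV[R]_n)) : R * 'cV[R]_(n + r) :=
  (t.2.1, col_mx t.2.2 t.1).
have bij_f : bijective f.
  exists (fun s => (dsubmx s.2, (s.1, usubmx s.2))).
    by move=> [u [z v]]; rewrite /f /= col_mxKu col_mxKd.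
  by move=> [z w]; rewrite /f /= vsubmxK.
rewrite -(card_preim_bij _ bij_f) -[r in (_ ^ r)%N]muln1 -card_mx -card_pred_snd.
apply: eq_card => -[u [z v]]; rewrite !inE /f /=.
suff -> : rowsub (widen_ord le_nN) (col_mx v u) = v by [].
apply/matrixP => i j; rewrite mxE.
by rewrite (_ : widen_ord le_nN i = lshift r i) ?col_mxEu //; apply: val_inj.
Qed.

Definition border_equiv_widen N n (le_nN : (n <= N)%N) (X : 'M[R]_n) :
  pred (R * 'cV[R]_N) :=
  [pred s | border_equiv X (s.1, rowsub (widen_ord le_nN) s.2)].

Lemma card_border_equiv_widen N n1 n2 (X : 'M[R]_n1) (Y : 'M[R]_n2)
    (le1 : (n1 <= N)%N) (le2 : (n2 <= N)%N) :
  stably_congruent X Y ->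
  #|border_equiv_widen le1 X| = #|border_equiv_widen le2 Y|.
Proof.
move=> /card_border_equiv_stable eXY; rewrite !card_widen_col.
have R_gt0 : (0 < #|R|)%N by apply/card_gt0P; exists 0.
have shift n k x : (n <= N)%N ->
    (#|R| ^ (n + k) * (#|R| ^ (N - n) * x) = #|R| ^ N * (#|R| ^ k * x))%N.
  by move=> le_nN; rewrite -[in RHS](subnKC le_nN) !expnD; ring.
apply/eqP; rewrite -(@eqn_pmul2l (#|R| ^ (n1 + n2))) ?expn_gt0 ?R_gt0 //.
by rewrite shift // addnC shift // eXY.
Qed.

End BorderCount.

Lemma index_enum_lt (T : finType) (S S' : pred T) x : #|S| = #|S'| -> S x ->
  (index x (enum S) < size (enum S'))%N.
Proof. by move=> eS Sx; rewrite -cardE -eS cardE index_mem mem_enum. Qed.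

Section PredBijection.
Variables (T : finType) (P Q : pred T).

Definition pred_bij (x : T) : T :=
  if P x then nth x (enum Q) (index x (enum P))
  else nth x (enum (predC Q)) (index x (enum (predC P))).

Hypothesis card_PQ : #|P| = #|Q|.

Lemma card_predC_eq : #|predC P| = #|predC Q|.
Proof. by apply/(@addnI #|P|); rewrite cardC card_PQ cardC. Qed.

Lemma pred_bijE x : Q (pred_bij x) = P x.
Proof.
rewrite /pred_bij; case: ifP => Px.
  by have := mem_nth x (index_enum_lt card_PQ Px); rewrite mem_enum.
have := mem_nth x (index_enum_lt card_predC_eq (negbT Px)).
by rewrite mem_enum inE => /negbTE.
Qed.

Lemma pred_bij_inj : injective pred_bij.
Proof.
have nth_index_inj (S S' : pred T) (eS : #|S| = #|S'|) x y : S x -> S y ->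
    nth x (enum S') (index x (enum S)) = nth y (enum S') (index y (enum S)) ->
    x = y.
  move=> Sx Sy; rewrite (set_nth_default x y (index_enum_lt eS Sy)) => /eqP.
  rewrite nth_uniq ?enum_uniq ?index_enum_lt // => /eqP.
  by move/(congr1 (nth x (enum S))); rewrite !nth_index ?mem_enum.
have pred_bij_eq x y : pred_bij x = pred_bij y -> P x = P y.
  by move=> exy; rewrite -pred_bijE exy pred_bijE.
move=> x y exy; have := pred_bij_eq x y exy; move: exy; rewrite /pred_bij.
case Px: (P x); case Py: (P y) => // exy _.
  exact: nth_index_inj card_PQ _ _ Px Py exy.
by apply: nth_index_inj card_predC_eq _ _ _ _ exy; rewrite inE ?Px ?Py.
Qed.

End PredBijection.

Lemma eqZp_natr q x y : (1 < q)%N -> ((x%:R : 'Z_q) == y%:R) = (x == y %[mod q]).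
Proof. by move=> q_gt1; rewrite -val_eqE /= !val_Zp_nat. Qed.

Section ChineseRemainder.
Variable a : nat.
Hypothesis a_gt1 : (1 < a)%N.

Definition crt_idem (p : nat) := chinese a`_p a`_p^' 1 0.

Lemma crt_idemE p p' : p \in primes a -> p' \in primes a ->
  ((crt_idem p)%:R : 'Z_(a`_p')) = (p == p')%:R.
Proof.
move=> pa p'a; apply/eqP; rewrite eqZp_natr ?p_part_gt1 //.
have [<- | neq_pp'] := eqVneq p p'.
  exact/eqP/(chinese_modl (coprime_partC _ _ _)).
have dvd_p' : (a`_p' %| a`_p^')%N.
  rewrite -(@partn_part p' p^' a) ?dvdn_part // => x; rewrite !inE => /eqP ->.
  by rewrite eq_sym.
by rewrite -(modn_dvdm _ dvd_p') (chinese_modr (coprime_partC _ _ _)) !mod0n.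
Qed.

Definition crt (y : forall p : nat, 'Z_(a`_p)) : 'I_a :=
  Ordinal (ltn_pmod (\sum_(p <- primes a) crt_idem p * y p) (ltnW a_gt1)).

Lemma crtE y p : p \in primes a -> ((crt y)%:R : 'Z_(a`_p)) = y p.
Proof.
move=> pa; rewrite /crt /=.
have -> : (((\sum_(p' <- primes a) crt_idem p' * y p') %% a)%:R : 'Z_(a`_p)) =
          (\sum_(p' <- primes a) crt_idem p' * y p')%:R.
  by apply/eqP; rewrite eqZp_natr ?p_part_gt1 // modn_dvdm ?dvdn_part.
rewrite natr_sum (bigD1_seq p) ?primes_uniq //= big_seq_cond big1 ?addr0.
  by rewrite natrM crt_idemE // eqxx mul1r natr_Zp.
move=> p' /andP[p'a neq_p'p].
by rewrite natrM crt_idemE // (negbTE neq_p'p) mul0r.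
Qed.

Lemma natr_parts_inj x y : (x < a)%N -> (y < a)%N ->
  (forall p, p \in primes a -> (x%:R : 'Z_(a`_p)) = y%:R) -> x = y.
Proof.
move=> xa ya exy; rewrite -(modn_small xa) -(modn_small ya).
apply/eqP/modn_partP => [|p pa]; first exact: ltnW.
by apply/eqP; rewrite -eqZp_natr ?p_part_gt1 ?exy.
Qed.

Section Gluing.
Variable N : nat.
Local Notation sample := ('I_a * {ffun 'I_N -> 'I_a})%type.
Local Notation sample_at p := ('Z_(a`_p) * 'cV['Z_(a`_p)]_N)%type.

Definition sample_mod (p : nat) (w : sample) : sample_at p :=
  ((val w.1)%:R, \col_i (val (w.2 i))%:R).

Definition glue (f : forall p : nat, sample_at p -> sample_at p) (w : sample) :
    sample :=
  (crt (fun p => (f p (sample_mod p w)).1),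
   [ffun i => crt (fun p => (f p (sample_mod p w)).2 i 0)]).

Lemma sample_mod_glue f w p :
  p \in primes a -> sample_mod p (glue f w) = f p (sample_mod p w).
Proof.
move=> pa; rewrite /sample_mod crtE // [RHS]surjective_pairing; congr pair.
by apply/matrixP => i j; rewrite !mxE ffunE (ord1 j) crtE.
Qed.

Lemma sample_mod_inj w1 w2 :
  (forall p, p \in primes a -> sample_mod p w1 = sample_mod p w2) -> w1 = w2.
Proof.
case: w1 w2 => [z1 x1] [z2 x2] e; congr pair.
  by apply/val_inj/(natr_parts_inj (ltn_ord _) (ltn_ord _)) => p /e [].
apply/ffunP => i.
apply/val_inj/(natr_parts_inj (ltn_ord _) (ltn_ord _)) => p /e [_].
by move/matrixP/(_ i 0); rewrite !mxE.
Qed.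

Lemma glue_inj f :
  (forall p, p \in primes a -> injective (f p)) -> injective (glue f).
Proof.
move=> f_inj w1 w2 e; apply: sample_mod_inj => p pa.
by apply: (f_inj p pa); rewrite -!sample_mod_glue // e.
Qed.

Lemma card_sample_mod_all (E E' : forall p : nat, pred (sample_at p)) :
  (forall p, p \in primes a -> #|E p| = #|E' p|) ->
  #|[pred w : sample | all (fun p => E p (sample_mod p w)) (primes a)]|
  = #|[pred w : sample | all (fun p => E' p (sample_mod p w)) (primes a)]|.
Proof.
move=> eE; pose f p := pred_bij (E' p) (E p).
have bij_glue : bijective (glue f).
  by apply/injF_bij/glue_inj => p pa; apply: pred_bij_inj (esym (eE p pa)).
rewrite -(card_preim_bij _ bij_glue); apply: eq_card => w; rewrite !inE.
apply/eq_in_all => p pa.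
by rewrite /= sample_mod_glue // (pred_bijE (esym (eE p pa))).
Qed.

End Gluing.
End ChineseRemainder.

Lemma cokEquivPP_stably q n1 n2 (H : 'M['Z_q]_n1) (H' : 'M['Z_q]_n2) :
  cokEquivPP H H' <-> stably_congruent H H'.
Proof.
split=> [[k1 [k2 [e [C1 [C2 [U [sC1 sC2 uU eH]]]]]]] | ].
  exists k1, k2, C1, C2; split=> //.
  apply: congruent_trans (congruent_castmx e _).
  by exists U, (invmx U); split; [exact: mulmxV | exact: mulVmx |].
move=> [k1 [k2 [C1 [C2 [e sC1 sC2 /congruent_trans cH]]]]].
have /congruent_unitmx [U uU eH] := cH _ _ (congruent_sym (congruent_castmx e _)).
by exists k1, k2, e, C1, C2, U.
Qed.

Lemma redZ_natr a q n : (1 < a)%N -> (1 < q)%N -> (q %| a)%N ->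
  ((val (n%:R : 'Z_a))%:R : 'Z_q) = n%:R.
Proof.
move=> a_gt1 q_gt1 qa; apply/eqP.
by rewrite eqZp_natr // [val _]val_Zp_nat // modn_dvdm.
Qed.

Lemma redZ_bordered a N n (le_nN : (n <= N)%N) (M : 'M[int]_n) w p :
  (1 < a)%N -> p \in primes a ->
  redZ a`_p (bordered le_nN M w.1 w.2) =
  border (redZ a`_p (redI a M)) (rowsub (widen_ord le_nN) (sample_mod p w).2)
         (sample_mod p w).1.
Proof.
move=> a_gt1 pa; have q_gt1 : (1 < a`_p)%N by rewrite p_part_gt1.
rewrite /bordered /redZ /border map_block_mx -map_trmx.
have -> : map_mx (fun x : 'Z_a => ((val x)%:R : 'Z_(a`_p)))
            (\col_i ((val (w.2 (widen_ord le_nN i)))%:R : 'Z_a)) =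
          rowsub (widen_ord le_nN) (sample_mod p w).2.
  by apply/matrixP => i j; rewrite !mxE redZ_natr ?dvdn_part.
congr block_mx; apply/matrixP => i j.
by rewrite (ord1 i) (ord1 j) !mxE eqxx !mulr1n redZ_natr ?dvdn_part.
Qed.

Lemma cokEquiv_bordered a N n (le_nN : (n <= N)%N) (M : 'M[int]_n) m
    (T : 'M['Z_a]_m) : (1 < a)%N ->
  [pred w : 'I_a * {ffun 'I_N -> 'I_a} |
    pb (cokEquiv (bordered le_nN M w.1 w.2) T)]
  =i [pred w | all (fun p : nat => border_equiv_widen (redZ a`_p T) le_nN
                               (redZ a`_p (redI a M)) (sample_mod p w))
                   (primes a)].
Proof.
move=> a_gt1 w; rewrite !inE /cokEquiv.
apply/pbP/allP => eqT p pa; have := eqT p pa; rewrite -p_part.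
  by move/cokEquivPP_stably; rewrite redZ_bordered // => /pbP.
by move/pbP; rewrite -redZ_bordered // => /cokEquivPP_stably.
Qed.

Theorem mainTheorem7 (a n1 n2 : nat) (M : 'M[int]_n1) (M' : 'M[int]_n2) :
  (2 <= a)%N -> (1 <= n1)%N -> (1 <= n2)%N ->
  symmx M -> symmx M' ->
  cokEquiv (redI a M) (redI a M') ->
  forall (m : nat) (T : 'M['Z_a]_m), symmx T ->
    #|[pred w : 'I_a * {ffun 'I_(maxn n1 n2) -> 'I_a} |
        pb (cokEquiv (bordered (leq_maxl n1 n2) M w.1 w.2) T)]|
    = #|[pred w : 'I_a * {ffun 'I_(maxn n1 n2) -> 'I_a} |
        pb (cokEquiv (bordered (leq_maxr n1 n2) M' w.1 w.2) T)]|.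
Proof.
move=> a_gt1 _ _ _ _ eqMM' m T _.
rewrite !(eq_card (cokEquiv_bordered _ _ _ a_gt1)).
pose E n (le_n : (n <= maxn n1 n2)%N) (X : 'M[int]_n) (p : nat) :=
  border_equiv_widen (redZ a`_p T) le_n (redZ a`_p (redI a X)).
apply: (card_sample_mod_all a_gt1 (E := E _ _ M) (E' := E _ _ M')) => p pa.
apply: card_border_equiv_widen; apply/cokEquivPP_stably.
by rewrite p_part; apply: eqMM'.
Qed.
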